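(* Let $\mathbb{S}=(S,\Sigma,\{\tau_a\mid a\in L\})$ be a labelled Markov process. Then $\mathcal{R}^T(\sigma(\llbracket\mathcal{L}\rrbracket))=\mathcal{R}(\sigma(\llbracket\mathcal{L}\rrbracket))$.
   Context: A labelled Markov process (LMP) is a triple $\mathbb{S}=(S,\Sigma,\{\tau_a\mid a\in L\})$ where $(S,\Sigma)$ is a measurable space, $L$ is a countable set of labels, and each $\tau_a:S\times\Sigma\to[0,1]$ is a Markov kernel: $\tau_a(s,\cdot)$ is a subprobability measure on $\Sigma$ for every $s\in S$, and $\tau_a(\cdot,X)$ is $\Sigma$-measurable for every $X\in\Sigma$. For a family $\Gamma\subseteq\mathcal{P}(S)$, $\mathcal{R}(\Gamma)=\{(s,t)\in S\times S:\forall A\in\Gamma\ (s\in A\iff t\in A)\}$. For $\Lambda\subseteq\Sigma$, $\mathcal{R}^T(\Lambda)=\{(s,t)\in S\times S:\forall a\in L\ \forall E\in\Lambda\ \tau_a(s,E)=\tau_a(t,E)\}$. The logic $\mathcal{L}$ has formulas $\phi::=\top\mid\phi_1\wedge\phi_2\mid\langle a\rangle_{>q}\phi$ with $a\in L$ and $q\in\mathbb{Q}\cap[0,1]$, interpreted by $\llbracket\top\rrbracket=S$, $\llbracket\phi\wedge\psi\rrbracket=\llbracket\phi\rrbracket\cap\llbracket\psi\rrbracket$, $\llbracket\langle a\rangle_{>q}\phi\rrbracket=\{s\in S:\tau_a(s,\llbracket\phi\rrbracket)>q\}$ (all these sets lie in $\Sigma$). $\sigma(\llbracket\mathcal{L}\rrbracket)$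 denotes the $\sigma$-algebra generated by all sets $\llbracket\phi\rrbracket$. *)

From HB Require Import structures.
From mathcomp Require Import all_boot all_order all_algebra.
From mathcomp Require Import all_classical all_reals all_analysis.
Set Implicit Arguments. Unset Strict Implicit. Unset Printing Implicit Defensive.
Import Order.TTheory GRing.Theory Num.Theory.
Local Open Scope classical_set_scope.
Local Open Scope ring_scope.

Definition LMP (d : measure_display) (T : measurableType d) (R : realType)
  (L : countType) := L -> R.-spker T ~> T.

Inductive formula (L : Type) : Type :=
| FTop : formula L
| FAnd : formula L -> formula L -> formula L
| FDiam : L -> rat -> formula L -> formula L.

Fixpoint wf_formula (L : Type) (phi : formula L) : Prop :=
  match phi with
  | FTop => True
  | FAnd p1 p2 => wf_formula p1 /\ wf_formula p2
  | FDiam _ q p => (0 <= q <= 1)%R /\ wf_formula p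
  end.

Fixpoint sem d (T : measurableType d) (R : realType) (L : countType)
  (tau : LMP T R L) (phi : formula L) : set T :=
  match phi with
  | FTop => setT
  | FAnd p1 p2 => sem tau p1 `&` sem tau p2
  | FDiam a q p => [set s | ((ratr q)%:E < tau a s (sem tau p))%E]
  end.

Definition sigma_logic d (T : measurableType d) (R : realType) (L : countType)
  (tau : LMP T R L) : set (set T) :=
  <<s [set sem tau phi | phi in @wf_formula L] >>.

Definition relR (T : Type) (Gamma : set (set T)) : set (T * T) :=
  [set st | forall A, Gamma A -> (A st.1 <-> A st.2)].

Definition relRT d (T : measurableType d) (R : realType) (L : countType)
  (tau : LMP T R L) (Lambda : set (set T)) : set (T * T) :=
  [set st | forall (a : L) (E : set T), Lambda E -> tau a st.1 E = tau a st.2 E].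

From mathcomp Require Import all_boot all_order all_algebra.
From mathcomp Require Import all_classical all_reals all_analysis.
Import Order.TTheory GRing.Theory Num.Theory.
Local Open Scope classical_set_scope.
Local Open Scope ring_scope.

(* Lemma 3.4: for a labelled Markov process, two states have the same
   transition probabilities on sigma([[L]]) iff they lie in the same sets of
   sigma([[L]]).
   - Two points s, t are separated by no set of a sigma-algebra as soon as they
     are separated by no generator, since the sets not separating s and t form
     a sigma-algebra ([relR_generated]).
   - (R^T => R) By induction on formulas, equal transition probabilities on
     sigma([[L]]) force s and t to satisfy the same formulas; conclude with the
     previous fact.
   - (R => R^T) If s and t satisfy the same formulas, then tau_a(s, [[phi]])
     and tau_a(t, [[phi]]) exceed the same rationals of [0,1], hence are equal
     ([eq_by_rational_thresholds]).  Formula denotations form a pi-system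
     containing S, so by the pi-lambda uniqueness theorem the two finite
     measures tau_a(s,.) and tau_a(t,.) agree on all of sigma([[L]]). *)

Lemma relR_generated (U : Type) (Gamma : set (set U)) :
  relR Gamma `<=` relR <<s Gamma >>.
Proof.
move=> [s t] /= sep_gen; apply: smallest_sub => //=; split => /=.
- by [].
- by move=> A [AsAt AtAs]; split => -[_ nA]; split => //; [move/AtAs|move/AsAt].
- by move=> F sepF; split => -[k _ Fk]; exists k => //; apply/sepF.
Qed.

Lemma eq_by_rational_thresholds (R : realType) (x y : \bar R) :
  (0 <= x <= 1)%E -> (0 <= y <= 1)%E ->
  (forall q : rat, 0 <= q <= 1 -> ((ratr q)%:E < x <-> (ratr q)%:E < y)%E) ->
  x = y.
Proof.
move=> x01 y01 same_thresholds.
wlog xy : x y x01 y01 same_thresholds / (x < y)%E.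
  move=> W; have [xy|yx|//] := ltgtP x y; first exact: W.
  by symmetry; apply: W => // q q01; have := same_thresholds q q01; tauto.
have [r ?] : exists r : R, x = r%:E.
  by case: x x01 xy {same_thresholds} => [r _ _||//]; [exists r|case/andP].
have [u ?] : exists u : R, y = u%:E.
  by case: y y01 xy {same_thresholds} => [u _ _||]; [exists u|case/andP|].
subst x y.
rewrite lte_fin in xy; rewrite !lee_fin in x01 y01.
have [q] := rat_in_itvoo xy; rewrite in_itv /= => /andP[rq qu].
have q01 : 0 <= q <= 1.
  case/andP: x01 => r0 _; case/andP: y01 => _ u1.
  have q0 : (0 : R) <= ratr q by rewrite (le_trans r0 (ltW rq)).
  have q1 : ratr q <= (1 : R) by rewrite (le_trans (ltW qu) u1).
  by apply/andP; split; [rewrite -(ler_rat R) rmorph0|rewrite -(ler_rat R) rmorph1].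
have /(same_thresholds q q01) : ((ratr q)%:E < u%:E)%E by rewrite lte_fin.
by rewrite lte_fin ltNge (ltW rq).
Qed.

Lemma spker_in01 d d' (X : measurableType d) (Y : measurableType d')
    (R : realType) (k : R.-spker X ~> Y) (x : X) (E : set Y) :
  measurable E -> (0 <= k x E <= 1)%E.
Proof.
move=> mE; rewrite measure_ge0 /=.
apply: le_trans (sprob_kernel_le1 k x).
by apply: le_measure => //; rewrite inE.
Qed.

Section lmp.
Context (d : measure_display) (T : measurableType d) (R : realType)
  (L : countType) (tau : LMP T R L).

(* Formula denotations are measurable: [[<a>_{>q} phi]] is the preimage of
   ]q, +oo] under the measurable map s |-> tau_a(s, [[phi]]). *)
Lemma sem_measurable (phi : formula L) : measurable (sem tau phi).
Proof.
elim: phi => [|p1 IH1 p2 IH2|a q p IH] /=.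
- exact: measurableT.
- exact: measurableI.
- have := measurable_fun_lte (f := fun _ => (ratr q)%:E) (measurable_cst _)
    (measurable_kernel (tau a) _ IH) measurableT (Y := [set true]) I.
  by rewrite setTI; congr measurable; apply/seteqP; split.
Qed.

Lemma sigma_logic_measurable (A : set T) : sigma_logic tau A -> measurable A.
Proof.
apply: smallest_sub; first exact: sigma_algebra_measurable.
by move=> _ [phi _ <-]; exact: sem_measurable.
Qed.

Lemma sem_in_sigma_logic (phi : formula L) :
  wf_formula phi -> sigma_logic tau (sem tau phi).
Proof. by move=> wf; apply: sub_gen_smallest; exists phi. Qed.

Lemma relRT_sem (s t : T) : relRT tau (sigma_logic tau) (s, t) ->
  forall phi, wf_formula phi -> (sem tau phi s <-> sem tau phi t).
Proof.
move=> same_tau; elim => [|p1 IH1 p2 IH2|a q p IH] /=.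
- by [].
- move=> [/IH1 [st1 ts1] /IH2 [st2 ts2]].
  by split=> -[h1 h2]; split; [exact: st1|exact: st2|exact: ts1|exact: ts2].
- by move=> [_ wp]; rewrite (same_tau a _ (sem_in_sigma_logic p wp)).
Qed.

Lemma relR_kernel_sem (s t : T) (a : L) (phi : formula L) :
  relR (sigma_logic tau) (s, t) -> wf_formula phi ->
  tau a s (sem tau phi) = tau a t (sem tau phi).
Proof.
move=> same_sets wf.
apply: eq_by_rational_thresholds => [||q q01];
  [exact: spker_in01 (sem_measurable _)|exact: spker_in01 (sem_measurable _)|].
exact: (same_sets _ (sem_in_sigma_logic (FDiam a q phi) (conj q01 wf))).
Qed.

End lmp.

Theorem lemma3p4 (d : measure_display) (T : measurableType d) (R : realType)
  (L : countType) (tau : LMP T R L) :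
  relRT tau (sigma_logic tau) = relR (sigma_logic tau).
Proof.
apply/seteqP; split => -[s t] same.
- apply: relR_generated => _ [phi wf <-]; exact: relRT_sem.
- move=> a E /=; pose G := [set sem tau phi | phi in @wf_formula L].
  apply: (@g_sigma_algebra_measure_unique _ _ _ G _ (fun _ => setT)) => //.
  + by move=> _ [phi _ <-]; exact: sem_measurable.
  + by move=> _; exists (FTop L).
  + by rewrite bigcup_const.
  + by move=> _ _ [p1 w1 <-] [p2 w2 <-]; exists (FAnd p1 p2).
  + by move=> _ [phi wf <-]; exact: relR_kernel_sem.
  + by move=> _; exact: le_lt_trans (sprob_kernel_le1 (tau a) s) (ltry _).
Qed.
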